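(* Let $n\in\mathbb{N}$. (1) If $n$ is odd and $n\geq 3$, then the path $P_n$ is an $\mathcal{N}$ position for Grim. (2) If $n$ is even and $n\geq 4$, then the cycle $C_n$ is a $\mathcal{P}$ position. (3) If $n$ is odd and $n\geq 5$, then the wheel $W_n$ is an $\mathcal{N}$ position. (4) For every non-empty finite simple graph $G$, the disjoint union $G\cup G$ of two copies of $G$ is a $\mathcal{P}$ position.
   Context: Grim is a two-player game on a finite simple undirected graph. Any isolated vertices of the starting graph are deleted before play begins. Players alternate moves; a move consists of selecting a vertex of the current graph and deleting it together with all its incident edges, after which every vertex that has become isolated is also deleted. The player who makes the last legal move wins (a player facing the empty graph has no move and loses). A graph is an $\mathcal{N}$ position if the player about to move has a winning strategy, and a $\mathcal{P}$ position otherwise. $P_n$, $C_n$ denote the path and cycle on $n$ vertices; $W_n$ denotes the wheel on $n$ vertices, i.e. the cycle $C_{n-1}$ together with one extra vertex (the center) adjacent to all vertices of the cycle. *)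

From mathcomp Require Import all_boot.
Set Implicit Arguments. Unset Strict Implicit. Unset Printing Implicit Defensive.

(* A position of Grim is the induced
   subgraph on a set S : {set T} of surviving vertices (deleting a vertex
   deletes exactly its incident edges, so the current graph is always an
   induced subgraph of the starting one). *)

Definition simple_graph (T : finType) (e : rel T) : Prop :=
  symmetric e /\ irreflexive e.

Definition grim_clean (T : finType) (e : rel T) (S : {set T}) : {set T} :=
  [set x in S | [exists y in S, e x y]].

Definition grim_move (T : finType) (e : rel T) (S : {set T}) (v : T) : {set T} :=
  grim_clean e (S :\ v).

Definition grim_start (T : finType) (e : rel T) : {set T} := grim_clean e setT.

(* N positions (player to move wins) and P positions (player to move loses);
   last player to move wins, the empty graph is a P position. *)
Inductive grimN (T : finType) (e : rel T) : {set T} -> Prop :=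
  | grimN_I (S : {set T}) (v : T) : v \in S -> grimP e (grim_move e S v) -> grimN e S
with grimP (T : finType) (e : rel T) : {set T} -> Prop :=
  | grimP_I (S : {set T}) : (forall v : T, v \in S -> grimN e (grim_move e S v)) -> grimP e S.

Definition is_N (T : finType) (e : rel T) : Prop := grimN e (grim_start e).
Definition is_P (T : finType) (e : rel T) : Prop := grimP e (grim_start e).

Definition path_rel (n : nat) : rel 'I_n :=
  fun i j => (i.+1 == j :> nat) || (j.+1 == i :> nat).
Arguments path_rel n : clear implicits.

Definition cycle_rel (n : nat) : rel 'I_n :=
  fun i j => (i.+1 %% n == j :> nat) || (j.+1 %% n == i :> nat).
Arguments cycle_rel n : clear implicits.

(* Wheel W_n: cycle C_(n-1) on Some 0..Some (n-2), plus center None. *)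
Definition wheel_rel (n : nat) : rel (option 'I_n.-1) :=
  fun x y => match x, y with
             | None, None => false
             | None, Some _ | Some _, None => true
             | Some i, Some j => cycle_rel n.-1 i j
             end.
Arguments wheel_rel n : clear implicits.

Definition dunion_rel (T : finType) (e : rel T) : rel (T + T) :=
  fun x y => match x, y with
             | inl a, inl b => e a b
             | inr a, inr b => e a b
             | _, _ => false
             end.

From mathcomp Require Import all_boot all_algebra.
From mathcomp Require Import ring zify.

Set Implicit Arguments.
Unset Strict Implicit.
Unset Printing Implicit Defensive.

Import GRing.Theory.

(* Strategy stealing by symmetry: if an involutive automorphism s of a position
   has no fixed point and never maps a vertex to a neighbour, the second player
   answers each move v by s v.  Since v and s v are not adjacent, deleting v
   does not isolate s v, so the answer is legal and the position stays
   s-symmetric; hence such positions are P.  The two copies of G are swapped by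
   such an s.  In P_n, n odd, deleting the middle vertex leaves a position
   mirrored by reversal.  In C_n, n even, the reply to v is its antipode, which
   leaves a position mirrored by the reflection through v.  In W_n, n odd,
   deleting the centre leaves such a cycle with the opponent to move.  Parity
   of n is what keeps every vertex non-adjacent to its mirror image. *)

Lemma grim_move_clean (T : finType) (e : rel T) :
  symmetric e -> forall (A : {set T}) (v : T),
  grim_move e (grim_clean e A) v = grim_clean e (A :\ v).
Proof.
move=> e_sym A v; apply/setP=> x; rewrite !inE.
apply/andP/andP=> [[/and3P[xv xA _] /exists_inP[y]]|[/andP[xv xA] /exists_inP[y]]].
- rewrite !inE => /and3P[yv yA _] exy; split; first by rewrite xv.
  by apply/exists_inP; exists y; rewrite // !inE yv.
- rewrite !inE => /andP[yv yA] exy; split.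
    by rewrite xv xA; apply/exists_inP; exists y.
  apply/exists_inP; exists y; rewrite // !inE yv yA.
  by apply/exists_inP; exists x; rewrite // e_sym.
Qed.

Section Mirror.

Variables (T : finType) (e : rel T) (s : T -> T).
Hypotheses (e_sym : symmetric e) (s_inv : involutive s).
Hypotheses (s_mono : {mono s : x y / e x y}) (s_nonadj : forall x, ~~ e x (s x)).

Lemma grimP_mirror (A : {set T}) :
  {homo s : x / x \in A} -> {in A, forall x, s x != x} -> grimP e (grim_clean e A).
Proof.
have [k] := ubnP #|A|; elim: k A => // k IH A ltAk sA s_free.
constructor=> v; rewrite (grim_move_clean e_sym) inE => /andP[vA /exists_inP[y yA evy]].
have sv_neq_v := s_free v vA.
have sy_neq_v : s y != v.
  by apply/eqP=> syv; move: (s_nonadj v); rewrite -{2}syv s_inv evy.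
apply: (@grimN_I _ _ _ (s v)).
  rewrite !inE sv_neq_v sA //=; apply/exists_inP; exists (s y); last by rewrite s_mono.
  by rewrite !inE sy_neq_v sA.
rewrite (grim_move_clean e_sym); apply: IH.
- rewrite (cardsD1 v A) vA /= ltnS in ltAk.
  by apply: leq_ltn_trans ltAk; apply/subset_leq_card/subD1set.
- move=> x; rewrite !inE => /and3P[xsv xv xA]; rewrite sA // andbT.
  by rewrite (inj_eq (can_inj s_inv)) xv; apply: contraNneq xsv => <-; rewrite s_inv.
- by move=> x; rewrite !inE => /and3P[_ _ /s_free].
Qed.

Lemma grimP_mirror_free : grimP e (grim_clean e [set x | s x != x]).
Proof.
apply: grimP_mirror => [x|x]; rewrite !inE //.
by apply: contra_neq => /(congr1 s); rewrite !s_inv.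
Qed.

End Mirror.

Definition sum_swap {T : Type} (x : T + T) : T + T :=
  match x with inl a => inr a | inr a => inl a end.

Lemma dunion_P (T : finType) (e : rel T) : symmetric e -> is_P (dunion_rel e).
Proof.
move=> e_sym; rewrite /is_P /grim_start.
have -> : [set: T + T] = [set x | sum_swap x != x :> T + T] by apply/setP=> -[] a; rewrite !inE.
apply: grimP_mirror_free => [[] a [] b|[]|[] a [] b|[]] //=; exact: e_sym.
Qed.

Lemma path_rel_sym (n : nat) : symmetric (path_rel n).
Proof. by move=> i j; rewrite /path_rel orbC. Qed.

Lemma path_rel_rev (n : nat) : {mono @rev_ord n : i j / path_rel n i j}.
Proof.
move=> [i lt_i_n] [j lt_j_n]; rewrite /path_rel /=.
by apply/orP/orP=> -[] /eqP ?; [right|left|right|left]; apply/eqP; lia.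
Qed.

Section OddPath.

Variable h : nat.
Local Notation n := h.*2.+1.

Lemma path_rel_rev_nonadj (i : 'I_n) : ~~ path_rel n i (rev_ord i).
Proof. by rewrite /path_rel /=; apply/negP=> /orP[] /eqP; have := ltn_ord i; lia. Qed.

Lemma rev_ord_fixed (i : 'I_n) : (rev_ord i == i) = (i == inord h).
Proof.
rewrite -!val_eqE /= inordK; last by lia.
by apply/eqP/eqP; have := ltn_ord i; lia.
Qed.

Lemma odd_path_N : 0 < h -> is_N (path_rel n).
Proof.
move=> h_gt0; rewrite /is_N /grim_start.
apply: (@grimN_I _ _ _ (inord h)).
  rewrite !inE; apply/exists_inP; exists (inord h.+1) => //.
  by rewrite /path_rel !inordK ?eqxx //; lia.
rewrite (grim_move_clean (@path_rel_sym _)).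
have -> : [set: 'I_n] :\ inord h = [set i | rev_ord i != i].
  by apply/setP=> i; rewrite !inE rev_ord_fixed andbT.
exact: grimP_mirror_free (@path_rel_sym _) rev_ordK (@path_rel_rev _) path_rel_rev_nonadj.
Qed.

End OddPath.

Lemma cycle_rel_sym (n : nat) : symmetric (cycle_rel n).
Proof. by move=> i j; rewrite /cycle_rel orbC. Qed.

Lemma cycle_relE (m : nat) (i j : 'I_m.+2) :
  cycle_rel m.+2 i j = (i + 1 == j)%R || (j + 1 == i)%R.
Proof. by rewrite /cycle_rel -!val_eqE /= !modnDmr !addn1. Qed.

Lemma wheel_rel_sym (n : nat) : symmetric (wheel_rel n).
Proof. by case=> [i|] [j|] //=; rewrite cycle_rel_sym. Qed.

Section EvenCycle.

Local Open Scope ring_scope.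

Variable h : nat.
Local Notation n := h.*2.+2.

Definition cycle_reflect (v i : 'I_n) : 'I_n := v + v - i.

Definition antipode : 'I_n := h.+1%:R.

Lemma cycle_reflectK (v : 'I_n) : involutive (cycle_reflect v).
Proof. by move=> i; rewrite /cycle_reflect; ring. Qed.

Lemma cycle_rel_reflect (v : 'I_n) : {mono cycle_reflect v : i j / cycle_rel n i j}.
Proof.
have reflect_succ i j : (cycle_reflect v i + 1 == cycle_reflect v j) = (j + 1 == i).
  by rewrite -subr_eq0 -[RHS]subr_eq0 /cycle_reflect; congr (_ == 0); ring.
by move=> i j; rewrite !cycle_relE !reflect_succ orbC.
Qed.

Lemma odd_Zp_add (i j : 'I_n) : odd (i + j)%R = odd i (+) odd j.
Proof. by rewrite /= odd_mod ?oddD //= odd_double. Qed.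

Lemma succ_neq_reflect (v i : 'I_n) : i + 1 != cycle_reflect v i.
Proof.
apply/eqP=> E; have : i + i + 1 = v + v by rewrite addrAC E /cycle_reflect; ring.
by move/(congr1 (fun x : 'I_n => odd x)); rewrite !odd_Zp_add !addbb.
Qed.

Lemma cycle_reflect_nonadj (v i : 'I_n) : ~~ cycle_rel n i (cycle_reflect v i).
Proof.
rewrite cycle_relE (negbTE (succ_neq_reflect v i)) /=.
by rewrite -{2}(cycle_reflectK v i) succ_neq_reflect.
Qed.

Lemma val_antipode : antipode = h.+1 :> nat.
Proof. by rewrite /antipode Zp_nat /= modn_small //; lia. Qed.

Lemma antipode_neq0 : antipode != 0.
Proof. by rewrite -val_eqE /= val_antipode. Qed.

Lemma Zp_double_eq0 (d : 'I_n) : (d + d == 0) = (d == 0) || (d == antipode).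
Proof.
rewrite -!val_eqE /= val_antipode; have := ltn_ord d.
move: (nat_of_ord d) => a lt_a_n.
case: (ltnP (a + a) n) => [small | big].
  by rewrite modn_small //; lia.
by rewrite -(subnK big) modnDr modn_small; lia.
Qed.

Lemma cycle_reflect_fixed (v i : 'I_n) :
  (cycle_reflect v i == i) = (i == v) || (i == v + antipode).
Proof.
have -> : (cycle_reflect v i == i) = ((i - v) + (i - v) == 0).
  by rewrite -subr_eq0 -oppr_eq0 /cycle_reflect; congr (_ == 0); ring.
by rewrite Zp_double_eq0 subr_eq0 subr_eq addrC.
Qed.

Lemma cycle_neighbour_avoid (v i : 'I_n) : (0 < h)%N -> exists2 j, j != v & cycle_rel n i j.
Proof.
move=> h_gt0; have [succ_v | succ_nv] := eqVneq (i + 1) v; last first.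
  by exists (i + 1); rewrite // cycle_relE eqxx.
exists (i - 1); last by rewrite cycle_relE subrK eqxx orbT.
rewrite -succ_v -subr_eq0 (_ : i - 1 - (i + 1) = - (1 + 1)); last by ring.
by rewrite oppr_eq0 -val_eqE /= !modn_small //; lia.
Qed.

Lemma addr_antipode_neq (v : 'I_n) : v + antipode != v.
Proof. by rewrite -{2}[v]addr0 (inj_eq (addrI v)) antipode_neq0. Qed.

Lemma even_cycle_P : (0 < h)%N -> is_P (cycle_rel n).
Proof.
move=> h_gt0; have C_sym := @cycle_rel_sym n.
constructor=> v _; rewrite (grim_move_clean C_sym).
have [j j_neq_v w_j] := cycle_neighbour_avoid v (v + antipode) h_gt0.
apply: (@grimN_I _ _ _ (v + antipode)).
  by rewrite !inE addr_antipode_neq; apply/exists_inP; exists j; rewrite // !inE j_neq_v.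
rewrite (grim_move_clean C_sym).
have -> : [set: 'I_n] :\ v :\ (v + antipode) = [set i | cycle_reflect v i != i].
  by apply/setP=> i; rewrite !inE cycle_reflect_fixed negb_or andbT andbC.
exact: grimP_mirror_free C_sym (cycle_reflectK v) (cycle_rel_reflect v) (cycle_reflect_nonadj v).
Qed.

Lemma odd_wheel_N : (0 < h)%N -> is_N (wheel_rel n.+1).
Proof.
move=> h_gt0; have W_sym := @wheel_rel_sym n.+1.
rewrite /is_N /grim_start; apply: (@grimN_I _ _ _ None).
  by rewrite !inE; apply/exists_inP; exists (Some 0).
rewrite (grim_move_clean W_sym); constructor=> -[v _|]; last by rewrite !inE.
rewrite (grim_move_clean W_sym).
have [j j_neq_v w_j] := cycle_neighbour_avoid v (v + antipode) h_gt0.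
apply: (@grimN_I _ _ _ (Some (v + antipode))).
  rewrite !inE /= (inj_eq Some_inj) addr_antipode_neq.
  by apply/exists_inP; exists (Some j); rewrite // !inE /= (inj_eq Some_inj) j_neq_v.
rewrite (grim_move_clean W_sym).
have -> : [set: option 'I_n] :\ None :\ Some v :\ Some (v + antipode) =
          [set x | omap (cycle_reflect v) x != x].
  apply/setP=> -[i|]; rewrite !inE //= !(inj_eq Some_inj).
  by rewrite cycle_reflect_fixed negb_or andbT andbC.
apply: grimP_mirror_free W_sym _ _ _.
- by case=> //= i; rewrite cycle_reflectK.
- by case=> [i|] [k|] //=; rewrite cycle_rel_reflect.
- by case=> //= i; rewrite cycle_reflect_nonadj.
Qed.

End EvenCycle.

Theorem corollary4p4 :
  (forall n : nat, odd n -> 3 <= n -> is_N (path_rel n)) /\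
  (forall n : nat, ~~ odd n -> 4 <= n -> is_P (cycle_rel n)) /\
  (forall n : nat, odd n -> 5 <= n -> is_N (wheel_rel n)) /\
  (forall (T : finType) (e : rel T),
      simple_graph e -> 0 < #|T| -> is_P (dunion_rel e)).
Proof.
split; [|split; [|split]].
- move=> n n_odd n_ge3; have [h -> h_gt0] : exists2 h, n = h.*2.+1 & 0 < h.
    by exists n./2; have := odd_double_half n; rewrite n_odd; lia.
  exact: odd_path_N.
- move=> n n_even n_ge4; have [h -> h_gt0] : exists2 h, n = h.*2.+2 & 0 < h.
    by exists n./2.-1; have := odd_double_half n; rewrite (negbTE n_even); lia.
  exact: even_cycle_P.
- move=> n n_odd n_ge5; have [h -> h_gt0] : exists2 h, n = h.*2.+3 & 0 < h.
    by exists n./2.-1; have := odd_double_half n; rewrite n_odd; lia.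
  exact: odd_wheel_N.
-
  by move=> T e [e_sym _] _; exact: dunion_P.
Qed.
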